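(* Let $V$ be a finite node set and let $x=(x_{u,v})$ be a real vector indexed by ordered pairs $(u,v)$ of distinct nodes of $V$ satisfying $0\le x_{u,v}\le 1$ for all such pairs and $\sum_{u\in V\setminus\{v\}}x_{u,v}\le 1$ for every $v\in V$. Let $\mathcal{W}$ be a finite nonempty set of directed walks that all end in the same node $t$, such that for any two distinct walks $W\neq W'\in\mathcal{W}$ there is a node $v$ with $|\delta^-_W(v)\cup\delta^-_{W'}(v)|\ge 2$. Then $$\sum_{W\in\mathcal{W}}x(W)\le\Big(\sum_{W\in\mathcal{W}}\ell_W\Big)-|\mathcal{W}|+1.$$
   Context: A directed walk is a sequence $W=v_0,a_1,v_1,\dots,a_k,v_k$ with arcs $a_i=(v_{i-1},v_i)$, $v_{i-1}\neq v_i$; it may repeat nodes and arcs. Its length $\ell_W=k$ is the number of arcs counted with multiplicity, and $x(W)=\sum_{i=1}^k x_{a_i}$ (with multiplicity). For a node $v$, $\delta^-_W(v)$ denotes the set of arcs of $W$ entering $v$ (i.e. the set of $a_i$ with head $v_i=v$). *)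

From mathcomp Require Import all_boot all_order all_algebra.
Set Implicit Arguments. Unset Strict Implicit. Unset Printing Implicit Defensive.
Import Order.TTheory GRing.Theory Num.Theory.

(* A directed walk v_0, a_1, v_1, ..., a_k, v_k is encoded by its nonempty
   node sequence [:: v_0; ...; v_k]; arcs are a_i = (v_{i-1}, v_i) and must
   join distinct nodes. *)
Definition is_walk (V : eqType) (W : seq V) : bool :=
  if W is h :: s then path (fun u v => u != v) h s else false.

Definition arcs (V : Type) (W : seq V) : seq (V * V) := zip W (behead W).

Definition wlen (V : Type) (W : seq V) : nat := size (arcs W).

Definition ends_in (V : eqType) (W : seq V) (t : V) : bool :=
  if W is h :: s then last h s == t else false.

Definition xW (R : numDomainType) (V : Type) (x : V -> V -> R) (W : seq V) : R :=
  (\sum_(a <- arcs W) x a.1 a.2)%R.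

Definition in_arcs (V : finType) (W : seq V) (v : V) : {set V * V} :=
  [set a : V * V | (a \in arcs W) && (a.2 == v)].

From mathcomp Require Import all_boot all_order all_algebra.
From mathcomp Require Import lra zify.
Import Order.TTheory GRing.Theory Num.Theory.
Set Implicit Arguments. Unset Strict Implicit. Unset Printing Implicit Defensive.

(* The deficit l_W - x(W) is the sum of 1 - x_a over the arcs of W; dropping
   repeated arcs and grouping them by head, it is at least
   sum_v sum_(a in delta^-_W(v)) (1 - x_a).  Fix a node v and let a_v be the
   arc that most often forms the whole of delta^-_W(v).  Then the walks W with
   delta^-_W(v) not contained in {a_v} are paid for by the deficits at v:
   two or more arcs into v have total weight at most 1, a single arc b costs
   1 - x_b, and the weights x_b of these singletons add up to at most the
   number of walks with delta^-_W(v) = {a_v}, since sum_b x_b <= 1.  By the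
   separation hypothesis, two distinct walks cannot both satisfy
   delta^-_W(v) \subset {a_v} at every v, so all walks but at most one are
   paid for at some node, whence sum_W (l_W - x(W)) >= |Ws| - 1. *)

Local Open Scope ring_scope.

Lemma mem_zip_path (T : eqType) (e : rel T) h s :
  path e h s -> forall a, a \in zip (h :: s) s -> e a.1 a.2.
Proof.
elim: s h => [|y s IHs] h //= /andP[ehy p] a.
by rewrite in_cons => /orP[/eqP-> // | /IHs]; apply.
Qed.

Lemma walk_arc_neq (V : eqType) (W : seq V) a :
  is_walk W -> a \in arcs W -> a.1 != a.2.
Proof. by case: W => [|h s] //= /mem_zip_path; apply. Qed.

Lemma sumr_undup_le (R : numDomainType) (T : eqType) (s : seq T) (f : T -> R) :
  (forall a, a \in s -> 0 <= f a) ->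
  \sum_(a <- undup s) f a <= \sum_(a <- s) f a.
Proof.
elim: s => [|y s IHs] f_ge0 /=; first by rewrite !big_nil.
have {}IHs := IHs (fun a sa => f_ge0 a (@mem_behead _ (y :: s) a sa)).
rewrite big_cons; case: ifP => [ys | _]; last by rewrite big_cons lerD2l.
by apply: le_trans IHs _; rewrite lerDr f_ge0 ?mem_head.
Qed.

Lemma wlen_sub_xW (R : numDomainType) (V : Type) (x : V -> V -> R) (W : seq V) :
  (wlen W)%:R - xW x W = \sum_(a <- arcs W) (1 - x a.1 a.2).
Proof. by rewrite sumrB big_const_seq count_predT -Monoid.iteropE /wlen. Qed.

Lemma sum_in_arcs_le (R : numDomainType) (V : finType) (x : V -> V -> R)
    (W : seq V) :
  (forall u v, u != v -> x u v <= 1) -> is_walk W ->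
  \sum_v \sum_(a in in_arcs W v) (1 - x a.1 a.2) <= (wlen W)%:R - xW x W.
Proof.
move=> x_le1 walkW; rewrite wlen_sub_xW.
have -> : \sum_v \sum_(a in in_arcs W v) (1 - x a.1 a.2) =
          \sum_(a <- undup (arcs W)) (1 - x a.1 a.2).
  rewrite [RHS]big_uniq ?undup_uniq // [RHS](partition_big snd xpredT) //=.
  by apply: eq_bigr => v _; apply: eq_bigl => a; rewrite inE mem_undup.
apply: sumr_undup_le => a /(walk_arc_neq walkW) /x_le1.
by rewrite subr_ge0.
Qed.

Definition arcs_into (V : finType) (v : V) : {set V * V} :=
  [set a | (a.2 == v) && (a.1 != v)].

Lemma in_arcs_sub (V : finType) (W : seq V) v :
  is_walk W -> in_arcs W v \subset arcs_into v.
Proof.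
move=> walkW; apply/subsetP => a; rewrite !inE => /andP[/(walk_arc_neq walkW)].
by move=> + /eqP a2v; rewrite a2v eqxx.
Qed.

Lemma sum_arcs_into (R : numDomainType) (V : finType) (x : V -> V -> R) v :
  \sum_(a in arcs_into v) x a.1 a.2 = \sum_(u | u != v) x u v.
Proof.
rewrite (reindex_onto (fun u => (u, v)) fst) => [|a]; last first.
  by rewrite inE => /andP[/eqP <- _]; case: a.
by apply: eq_bigl => u; rewrite inE /= !eqxx andbT.
Qed.

Lemma sumr_indicator (R : numDomainType) (I : finType) (P : pred I) :
  \sum_i (P i)%:R = #|[set i | P i]|%:R :> R.
Proof.
rewrite -sum1_card natr_sum [RHS]big_mkcond /=.
by apply: eq_bigr => i _; rewrite inE; case: (P i).
Qed.

Section PopularSingleton.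
Variables (R : realFieldType) (T I : finType) (y : T -> R) (H : {set T}).
Hypothesis y_ge0 : forall b, b \in H -> 0 <= y b.
Hypothesis sum_y_le1 : \sum_(b in H) y b <= 1.
Variable S : I -> {set T}.
Hypothesis S_subH : forall i, S i \subset H.

Let singleton_weight i := \sum_b (if S i == [set b] then y b else 0).
Let mult b := #|[set i | S i == [set b]]|.

Lemma sum_y_subset_le1 (A : {set T}) : A \subset H -> \sum_(b in A) y b <= 1.
Proof.
move=> AH; apply: le_trans sum_y_le1.
rewrite [X in _ <= X](big_setID A) /= (setIidPr AH) lerDl sumr_ge0 // => b.
by rewrite inE => /andP[_]; apply: y_ge0.
Qed.

Lemma indicator_le_deficit a i :
  (~~ (S i \subset [set a]))%:R + (S i == [set a])%:R - singleton_weight i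
  <= \sum_(b in S i) (1 - y b).
Proof.
have set1_neq0 b : (set0 == [set b]) = false.
  by apply/negbTE/eqP => /setP/(_ b); rewrite !inE eqxx.
rewrite /singleton_weight.
have [/cards0_eq-> | [/eqP/cards1P[b ->] | Si_ge2]] :
    #|S i| = 0%N \/ #|S i| = 1%N \/ (2 <= #|S i|)%N by lia.
- rewrite big1 => [|b _]; last by rewrite set1_neq0.
  by rewrite big_set0 sub0set set1_neq0 subr0 addr0.
- rewrite (bigD1 b) //= eqxx big1 => [|c]; last first.
    by rewrite (inj_eq set1_inj) eq_sym => /negbTE->.
  rewrite addr0 big_set1 sub1set inE (inj_eq set1_inj).
  by case: (b == a); rewrite /= ?add0r ?addr0.
- have not_set1 c : (S i == [set c]) = false.
    by apply/negbTE/eqP => Si1; rewrite Si1 cards1 in Si_ge2.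
  have -> : (S i \subset [set a]) = false.
    by apply/negbTE/negP => /subset_leq_card; rewrite cards1; lia.
  rewrite big1 => [|c _]; last by rewrite not_set1.
  rewrite not_set1 sumrB sumr_const.
  have := sum_y_subset_le1 (S_subH i).
  have : 2 <= #|S i|%:R :> R by rewrite (ler_nat R 2).
  rewrite /=; lra.
Qed.

Lemma sum_singleton_weight_le a :
  (forall b, (mult b <= mult a)%N) -> \sum_i singleton_weight i <= (mult a)%:R.
Proof.
move=> a_max; rewrite exchange_big /=.
rewrite (eq_bigr (fun b => y b *+ mult b)) => [|b _]; last first.
  by rewrite -big_mkcond sumr_const /mult cardsE.
rewrite (bigID (mem H)) /= [X in _ + X]big1 ?addr0 => [|b bH]; last first.
  suff -> : mult b = 0%N by [].
  apply/eqP; rewrite cards_eq0; apply/eqP/setP => i; rewrite !inE.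
  apply: contraNF bH => /eqP Si1; have /subsetP := S_subH i.
  by apply; rewrite Si1 set11.
apply: le_trans (_ : \sum_(b in H) y b *+ mult a <= _).
  by apply: ler_sum => b bH; apply: ler_wpMn2l; [apply: y_ge0 | apply: a_max].
by rewrite sumrMnl; apply: ler_wMn2r.
Qed.

Lemma exists_popular_singleton : exists A : {set T},
  (#|A| <= 1)%N /\
  #|[set i | ~~ (S i \subset A)]|%:R <= \sum_i \sum_(b in S i) (1 - y b).
Proof.
case: (pickP T) => [b0 _ | T0]; last first.
  have Si0 i : S i \subset set0 by apply/subsetP => b; have := T0 b.
  exists set0; rewrite cards0; split=> //.
  rewrite big1 => [|i _]; last by rewrite big_pred0 // => b; have := T0 b.
  rewrite (_ : [set i | _] = set0) ?cards0 //.
  by apply/setP => i; rewrite !inE Si0.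
pose a := [arg max_(a > b0) mult a].
have a_max b : (mult b <= mult a)%N.
  by rewrite /a; case: arg_maxnP => // c _; apply.
exists [set a]; rewrite cards1; split=> //.
apply: le_trans (ler_sum _ (fun i _ => indicator_le_deficit a i)).
rewrite sumrB big_split /= !sumr_indicator.
have := sum_singleton_weight_le a_max.
rewrite /mult; lra.
Qed.

End PopularSingleton.

Lemma exists_popular_in_arc (R : realFieldType) (V I : finType)
    (x : V -> V -> R) (W : I -> seq V) v :
  (forall u w, u != w -> 0 <= x u w) -> \sum_(u | u != v) x u v <= 1 ->
  (forall i, is_walk (W i)) ->
  exists A : {set V * V}, (#|A| <= 1)%N /\
    #|[set i | ~~ (in_arcs (W i) v \subset A)]|%:R <=
      \sum_i \sum_(a in in_arcs (W i) v) (1 - x a.1 a.2).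
Proof.
move=> x_ge0 x_into_le1 walkW.
apply: (exists_popular_singleton (H := arcs_into v)) => [b | | i].
- by rewrite inE => /andP[/eqP <- /x_ge0].
- by rewrite sum_arcs_into.
- exact: in_arcs_sub.
Qed.

Lemma card_le_sum_pair_cover (K I : finType) (D : K -> {set I}) :
  (forall i j, i != j -> exists k, (i \in D k) || (j \in D k)) ->
  (#|I| <= \sum_k #|D k| + 1)%N.
Proof.
move=> D_pairs; set U := \bigcup_k D k.
have U_le : (#|U| <= \sum_k #|D k|)%N.
  rewrite /U; elim/big_rec2: _ => [|k m A _ le_Am]; first by rewrite cards0.
  by apply: leq_trans (leq_card_setU _ _) _; rewrite leq_add2l.
have UC_le1 : (#|~: U| <= 1)%N.
  rewrite leqNgt; apply/card_gt1P => -[i [j [iU jU ij]]].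
  have [k /orP ijDk] := D_pairs i j ij.
  move: iU jU; rewrite !inE => /bigcupP iU /bigcupP jU.
  by case: ijDk => ?; [apply: iU | apply: jU]; exists k.
by have := cardsC U; lia.
Qed.

Local Close Scope ring_scope.

Theorem lemma1 (R : realFieldType) (V : finType) (x : V -> V -> R)
  (t : V) (Ws : seq (seq V))
  (hx01 : forall u v : V, u != v -> (0 <= x u v)%R /\ (x u v <= 1)%R)
  (hxin : forall v : V, (\sum_(u | u != v) x u v <= 1)%R)
  (hWs_uniq : uniq Ws) (hWs_ne : Ws != [::])
  (hwalk : forall W, W \in Ws -> is_walk W)
  (hend : forall W, W \in Ws -> ends_in W t)
  (hsep : forall W W', W \in Ws -> W' \in Ws -> W != W' ->
            exists v : V, 2 <= #|in_arcs W v :|: in_arcs W' v|) :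
  (\sum_(W <- Ws) xW x W <=
     (\sum_(W <- Ws) wlen W)%:R - (size Ws)%:R + 1)%R.
Proof.
have x_ge0 u v : u != v -> (0 <= x u v)%R by move=> /hx01[].
have x_le1 u v : u != v -> (x u v <= 1)%R by move=> /hx01[].
set n := size Ws; pose W (i : 'I_n) := nth [::] Ws i.
have W_in i : W i \in Ws by apply: mem_nth.
have walkW i : is_walk (W i) by apply: hwalk.
have /fin_all_exists[A A_spec] v :=
  exists_popular_in_arc (v := v) x_ge0 (hxin v) walkW.
pose D v := [set i | ~~ (in_arcs (W i) v \subset A v)].
have cover : n <= \sum_v #|D v| + 1.
  rewrite -{1}[n]card_ord; apply: card_le_sum_pair_cover => i j ij.
  have Wij : W i != W j by rewrite nth_uniq.
  have [v sep] := hsep _ _ (W_in i) (W_in j) Wij.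
  exists v; rewrite !inE -negb_and; apply: contraTN sep => /andP[iA jA].
  have /subset_leq_card : in_arcs (W i) v :|: in_arcs (W j) v \subset A v.
    by rewrite subUset iA jA.
  by have [+ _] := A_spec v; rewrite -ltnNge; lia.
suff : (n%:R - 1 <= \sum_(W <- Ws) ((wlen W)%:R - xW x W))%R.
  by rewrite sumrB -natr_sum; lra.
rewrite (big_nth [::]) big_mkord.
apply: le_trans (ler_sum _ (fun i _ => sum_in_arcs_le x_le1 (walkW i))).
rewrite exchange_big /=; apply: le_trans (ler_sum _ (fun v _ => (A_spec v).2)).
by rewrite -natr_sum lerBlDr natr1 ler_nat -addn1.
Qed.
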